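(* Let $n,r,w\ge 1$ be integers and $N=nr$. The modular $N\times N$ optical cross-connect $\hat{\mathcal{Q}}(n\times r,w)$ defined below is nonblocking at each wavelength: for every wavelength $\lambda\in\{\lambda_0,\dots,\lambda_{w-1}\}$, every input $1\times n$ WSS $ap'$ and every output $n\times1$ WSS $bq'$ ($a,b\in\{0,\dots,n-1\}$, $p',q'\in\{0,\dots,r-1\}$), and every set of already established connections, if $\lambda$ is idle at input $ap'$ and idle at output $bq'$, then a connection at wavelength $\lambda$ from input $ap'$ to output $bq'$ can be established without altering the existing connections.
   Context: Model of components. A $1\times k$ wavelength selective switch (WSS) has one input and $k$ outputs; each wavelength present at its input can be switched to any one of its $k$ outputs, independently of the other wavelengths. A $k\times 1$ WSS is the inverse: it forwards to its single output signals arriving at its $k$ inputs, provided no two signals on the same wavelength are fed to it simultaneously (each wavelength at the output comes from at most one input, chosen independently per wavelength). For an integer $r$, the classical $r\times r$ OXC $\mathcal{Q}(r,w)$ consists of $r$ input $1\times r$ WSSs numbered $0,\dots,r-1$ (its inputs), $r$ output $r\times 1$ WSSs numbered $0,\dots,r-1$ (its outputs), and, for all $p',q'$, exactly one fiber from the $q'$th output of input WSS $p'$ to the $p'$th input of output WSS $q'$. The modular OXC $\hat{\mathcal{Q}}(n\times r,w)$ consists of: $N$ input $1\times n$ WSSs labelled $ap'$ (the $p$th one, $p=ar+p'$; these are the OXC inputs), $n^2$ classical $r\times r$ OXCs $\mathcal{Q}_{ab}(r)$ ($a,b\in\{0,\dots,n-1\}$), and $N$ output $n\times 1$ WSSs labelled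 $bq'$ (the $q$th one, $q=br+q'$; these are the OXC outputs). The $b$th output of $1\times n$ WSS $ap'$ is connected to the $p'$th input of $\mathcal{Q}_{ab}(r)$, and the $q'$th output of $\mathcal{Q}_{ab}(r)$ is connected to the $a$th input of $n\times1$ WSS $bq'$. Every port and link carries wavelengths $\lambda_0,\dots,\lambda_{w-1}$; a connection at wavelength $\lambda$ from input $ap'$ to output $bq'$ uses $\lambda$ along a path of links from that input to that output; each wavelength on each port or link is used by at most one connection, and a wavelength is idle at a port if no existing connection uses it there. *)

From mathcomp Require Import all_boot.
Set Implicit Arguments. Unset Strict Implicit. Unset Printing Implicit Defensive.

Section OXC.
Variables n r w : nat.

Inductive node : Type :=
  | InW  of 'I_n & 'I_r          (* input 1 x n WSS  a p'                    *)
  | QIn  of 'I_n & 'I_n & 'I_r   (* input 1 x r WSS p' of Q_ab (a, b, p')    *)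
  | QOut of 'I_n & 'I_n & 'I_r   (* output r x 1 WSS q' of Q_ab (a, b, q')   *)
  | OutW of 'I_n & 'I_r.         (* output n x 1 WSS  b q'                   *)

Inductive link : Type :=
  (* b-th output of 1 x n WSS a p'  ->  p'-th input of Q_ab *)
  | L1 of 'I_n & 'I_r & 'I_n
  (* inside Q_ab: q'-th output of input WSS p' -> p'-th input of output WSS q' *)
  | L2 of 'I_n & 'I_n & 'I_r & 'I_r
  (* q'-th output of Q_ab  ->  a-th input of n x 1 WSS b q' *)
  | L3 of 'I_n & 'I_n & 'I_r.

Definition ltail (l : link) : node :=
  match l with
  | L1 a p' b => InW a p'
  | L2 a b p' q' => QIn a b p'
  | L3 a b q' => QOut a b q'
  end.

Definition lhead (l : link) : node :=
  match l with
  | L1 a p' b => QIn a b p'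
  | L2 a b p' q' => QOut a b q'
  | L3 a b q' => OutW b q'
  end.

Fixpoint path_from (u : node) (ls : list link) (v : node) : Prop :=
  match ls with
  | nil => u = v
  | l :: ls' => ltail l = u /\ path_from (lhead l) ls' v
  end.

Fixpoint lin (l : link) (ls : list link) : Prop :=
  match ls with
  | nil => False
  | l' :: ls' => l = l' \/ lin l ls'
  end.

Record conn : Type := Conn {
  cwl : 'I_w;
  csrc : 'I_n * 'I_r;
  cdst : 'I_n * 'I_r;
  cpath : list link }.

Definition valid_conn (c : conn) : Prop :=
  path_from (InW (csrc c).1 (csrc c).2) (cpath c) (OutW (cdst c).1 (cdst c).2).

Definition valid_family (I : Type) (cs : I -> conn) : Prop :=
  (forall i, valid_conn (cs i)) /\
  (forall i j, i <> j -> cwl (cs i) = cwl (cs j) ->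
     [/\ csrc (cs i) <> csrc (cs j),
         cdst (cs i) <> cdst (cs j) &
         forall l, lin l (cpath (cs i)) -> ~ lin l (cpath (cs j))]).

Definition idle_at_input (I : Type) (cs : I -> conn) (lam : 'I_w)
  (a : 'I_n) (p' : 'I_r) : Prop :=
  forall i, ~ (cwl (cs i) = lam /\ csrc (cs i) = (a, p')).

Definition idle_at_output (I : Type) (cs : I -> conn) (lam : 'I_w)
  (b : 'I_n) (q' : 'I_r) : Prop :=
  forall i, ~ (cwl (cs i) = lam /\ cdst (cs i) = (b, q')).

Definition add_conn (I : Type) (cs : I -> conn) (c : conn) : option I -> conn :=
  fun o => match o with Some i => cs i | None => c end.

End OXC.

(* In the modular OXC there is exactly one route from input [ap']
   to output [bq']: through [Q_ab], entering its input WSS [p'] and leaving by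
   its output WSS [q']. Each of its three links determines the OXC input or the
   OXC output it serves, so an existing connection on the same wavelength that
   shared a link with this route would occupy [ap'] or [bq'] at that
   wavelength, contradicting idleness. *)
From mathcomp Require Import all_boot.

Set Implicit Arguments. Unset Strict Implicit. Unset Printing Implicit Defensive.

Section Routes.
Variables n r : nat.

Definition route (a : 'I_n) (p : 'I_r) (b : 'I_n) (q : 'I_r) : list (link n r) :=
  [:: L1 a p b; L2 a b p q; L3 a b q].

Lemma path_from_route a p b q : path_from (InW a p) (route a p b q) (OutW b q).
Proof. by []. Qed.

Lemma path_from_InW_OutW a p b q (ls : list (link n r)) :
  path_from (InW a p) ls (OutW b q) -> ls = route a p b q.
Proof.
case: ls => [|[a1 p1 b1|? ? ? ?|? ? ?] ls] //= [] // [-> ->].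
case: ls => [|[? ? ?|a2 b2 p2 q2|? ? ?] ls] //= [] // [-> -> ->].
case: ls => [|[? ? ?|? ? ? ?|a3 b3 q3] ls] //= [] // [-> -> ->].
by case: ls => [[-> ->]|[? ? ?|? ? ? ?|? ? ?] ? []].
Qed.

Lemma lin_route_route a p b q a' p' b' q' (l : link n r) :
  lin l (route a p b q) -> lin l (route a' p' b' q') ->
  (a, p) = (a', p') \/ (b, q) = (b', q').
Proof.
by move=> [|[|[|[]]]] -> [|[|[|[]]]] // [] *; subst; auto.
Qed.

Lemma valid_conn_share_link w (c1 c2 : conn n r w) l :
  valid_conn c1 -> valid_conn c2 -> lin l (cpath c1) -> lin l (cpath c2) ->
  csrc c1 = csrc c2 \/ cdst c1 = cdst c2.
Proof.
case: c1 c2 => [? [? ?] [? ?] ?] [? [? ?] [? ?] ?].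
rewrite /valid_conn /= => /path_from_InW_OutW -> /path_from_InW_OutW ->.
exact: lin_route_route.
Qed.

End Routes.

Section AddConnection.
Variables (n r w : nat) (I : Type) (cs : I -> conn n r w) (c : conn n r w).

Definition compatible (c1 c2 : conn n r w) : Prop :=
  [/\ csrc c1 <> csrc c2, cdst c1 <> cdst c2 &
      forall l, lin l (cpath c1) -> ~ lin l (cpath c2)].

Lemma compatible_sym c1 c2 : compatible c1 c2 -> compatible c2 c1.
Proof. by case=> Hs Hd Hl; split=> [/esym|/esym|l H2 H1] //; apply: Hl H1 H2. Qed.

Lemma valid_family_add_conn :
  valid_family cs -> valid_conn c ->
  (forall i, cwl (cs i) = cwl c -> compatible (cs i) c) ->
  valid_family (add_conn cs c).
Proof.
move=> [Hv Hd] Hc Hnew.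
split=> [[i|] //=|[i|] [j|] //= Hij Hwl].
- by apply: Hd => // Eij; apply: Hij; rewrite Eij.
- exact: Hnew.
- exact/compatible_sym/Hnew.
Qed.

End AddConnection.

Theorem theorem1 (n r w : nat) (hn : 0 < n) (hr : 0 < r) (hw : 0 < w)
  (I : finType) (cs : I -> conn n r w) :
  valid_family cs ->
  forall (lam : 'I_w) (a b : 'I_n) (p' q' : 'I_r),
    idle_at_input cs lam a p' ->
    idle_at_output cs lam b q' ->
    exists c : conn n r w,
      [/\ cwl c = lam, csrc c = (a, p'), cdst c = (b, q') &
          valid_family (add_conn cs c)].
Proof.
move=> Hcs lam a b p' q' Hin Hout.
pose c := Conn lam (a, p') (b, q') (route a p' b q').
have Hc : valid_conn c := path_from_route a p' b q'.
exists c; split=> //; apply: valid_family_add_conn => // i Hwl.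
have Hsrc : csrc (cs i) <> csrc c by move=> E; apply: (Hin i).
have Hdst : cdst (cs i) <> cdst c by move=> E; apply: (Hout i).
split=> // l Hl Hl'.
by case: (valid_conn_share_link (Hcs.1 i) Hc Hl Hl').
Qed.
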